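(* Let $f:\mathbb{R}^d \to \mathbb{R}^K$ be a differentiable classifier, and let $x_{\mathrm{orig}}\in C$ be a point with class $c$. Then for any $\alpha>0$ and any $\beta\in\mathbb{R}$, the output $x_{\mathrm{out}}$ of the FAB-attack algorithm (described in the context) run on the classifier $f$ is the same as its output when run on the classifier $g=\alpha f$ and when run on the classifier $h=f+\beta$ (i.e. $h_r=f_r+\beta$ for every $r=1,\dots,K$). Here all runs use the same inputs $x_{\mathrm{orig}}, c, N_{\mathrm{restarts}}, N_{\mathrm{iter}}, \alpha_{\max}, \beta_{\mathrm{b}}, \eta, \epsilon, p$ and the same random draws for the restarts.
   Context: A classifier $f:\mathbb{R}^d\to\mathbb{R}^K$ assigns $x$ to the class $\arg\max_{r} f_r(x)$. Let $C=\{z\in\mathbb{R}^d: l_i\le z_i\le u_i,\ i=1,\dots,d\}$ be a box, $p\in\{1,2,\infty\}$ and $q$ its dual exponent ($1/p+1/q=1$). For a hyperplane $\pi:\langle w,z\rangle+b=0$ and $x\in C$, define $\mathrm{proj}_p(x,\pi,C)$ as the minimizer of $\|z-x\|_p$ subject to $\langle w,z\rangle+b=0$ and $z\in C$ if this problem is feasible; otherwise, with $\rho=\mathrm{sign}(\langle w,x\rangle+b)$, it is the point $z'$ with $z'_i=l_i$ if $\rho w_i>0$, $z'_i=u_i$ if $\rho w_i<0$, $z'_i=x_i$ if $w_i=0$. Let $\mathrm{proj}_C$ denote componentwise clipping onto $C$. For a point $x$ and classes $l\ne c$, let $\pi_l$ be the hyperplane $\{z: f_l(x)-f_c(x)+\langle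 \nabla f_l(x)-\nabla f_c(x), z-x\rangle=0\}$. FAB-attack (inputs: $x_{\mathrm{orig}}$, class $c$, integers $N_{\mathrm{restarts}},N_{\mathrm{iter}}$, $\alpha_{\max}\in[0,1]$, $\beta_{\mathrm{b}}\in(0,1)$, $\eta\ge 1$, $\epsilon>0$, $p$): set $u=+\infty$. For $j=1,\dots,N_{\mathrm{restarts}}$: if $j=1$ set $x^{(0)}=x_{\mathrm{orig}}$, else sample $x^{(0)}$ randomly with $\|x^{(0)}-x_{\mathrm{orig}}\|_p=\min\{u,\epsilon\}/2$. For $i=0,\dots,N_{\mathrm{iter}}-1$: compute $s=\arg\min_{l\ne c}\frac{|f_l(x^{(i)})-f_c(x^{(i)})|}{\|\nabla f_l(x^{(i)})-\nabla f_c(x^{(i)})\|_q}$ and the hyperplane $\pi_s$ at $x^{(i)}$; set $\delta^{(i)}=\mathrm{proj}_p(x^{(i)},\pi_s,C)-x^{(i)}$, $\delta^{(i)}_{\mathrm{orig}}=\mathrm{proj}_p(x_{\mathrm{orig}},\pi_s,C)-x_{\mathrm{orig}}$, $a=\min\{\|\delta^{(i)}\|_p/(\|\delta^{(i)}\|_p+\|\delta^{(i)}_{\mathrm{orig}}\|_p),\alpha_{\max}\}$, and $x^{(i+1)}=\mathrm{proj}_C\big((1-a)(x^{(i)}+\eta\delta^{(i)})+a(x_{\mathrm{orig}}+\eta\delta^{(i)}_{\mathrm{orig}})\big)$. If $x^{(i+1)}$ is not classified as $c$: if $\|x^{(i+1)}-x_{\mathrm{orig}}\|_p<u$, set $x_{\mathrm{out}}=x^{(i+1)}$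 and $u=\|x^{(i+1)}-x_{\mathrm{orig}}\|_p$; then set $x^{(i+1)}\leftarrow(1-\beta_{\mathrm{b}})x_{\mathrm{orig}}+\beta_{\mathrm{b}}x^{(i+1)}$. Finally, perform 3 steps of final search on $x_{\mathrm{out}}$: with $s\ne c$ the class assigned to $x_{\mathrm{out}}$, and writing $\phi=f_s-f_c$, set $x_{\mathrm{temp}}=x_{\mathrm{out}}-\frac{\phi(x_{\mathrm{out}})(x_{\mathrm{out}}-x_{\mathrm{orig}})}{\phi(x_{\mathrm{out}})+\phi(x_{\mathrm{orig}})}$, and replace $x_{\mathrm{out}}$ by $x_{\mathrm{temp}}$ in this formula if $\phi(x_{\mathrm{temp}})>0$, or replace $x_{\mathrm{orig}}$ by $x_{\mathrm{temp}}$ in this formula if $\phi(x_{\mathrm{temp}})<0$. The output is $x_{\mathrm{out}}$. *)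

From HB Require Import structures.
From mathcomp Require Import all_boot all_order all_algebra.
From mathcomp Require Import all_classical all_reals.
From mathcomp Require Import topology normedtype derive.
Set Implicit Arguments. Unset Strict Implicit. Unset Printing Implicit Defensive.
Import Order.TTheory GRing.Theory Num.Theory.
Import numFieldNormedType.Exports.
Local Open Scope ring_scope.
Local Open Scope classical_set_scope.

Inductive pexp := P1 | P2 | PInf.
Definition dualp (p : pexp) : pexp :=
  match p with P1 => PInf | P2 => P2 | PInf => P1 end.

Section FAB.
Context {R : realType} {d : nat}.
Notation vec := 'rV[R]_d.

Definition normp (p : pexp) (v : vec) : R :=
  match p with
  | P1 => \sum_i `|v 0 i|
  | P2 => Num.sqrt (\sum_i v 0 i ^+ 2)
  | PInf => \big[Num.max/0]_i `|v 0 i|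
  end.

Definition dotv (w z : vec) : R := \sum_i w 0 i * z 0 i.

Definition inbox (l u z : vec) : Prop := forall i, l 0 i <= z 0 i <= u 0 i.

Definition clip (l u z : vec) : vec :=
  \row_i Num.min (Num.max (z 0 i) (l 0 i)) (u 0 i).

Definition onhyp (w : vec) (b : R) (z : vec) : Prop := dotv w z + b = 0.

(* proj_p(x, pi, C); the minimizer is selected by the choice operator xget
   from the SET of minimizers (which depends only on the hyperplane as a set). *)
Definition proj (p : pexp) (l u x w : vec) (b : R) : vec :=
  if `[< exists z, inbox l u z /\ onhyp w b z >] then
    xget x [set z | inbox l u z /\ onhyp w b z /\
                    forall z', inbox l u z' -> onhyp w b z' ->
                               normp p (z - x) <= normp p (z' - x)]
  else
    let rho := Num.sg (dotv w x + b) in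
    \row_i (if 0 < rho * w 0 i then l 0 i
            else if rho * w 0 i < 0 then u 0 i else x 0 i).

Definition grad (g : vec -> R) (x : vec) : vec :=
  \row_(i < d) (derive g x (delta_mx 0 i : vec) : R).

Section Alg.
Context {K : nat}.
Variable (F : 'I_K -> vec -> R).

(* class assigned to x: argmax_r F r x (ties broken by the fintype arg max;
   c is only the default index) *)
Definition cls (c : 'I_K) (x : vec) : 'I_K := [arg max_(r > c) F r x]%O.

Variables (p : pexp) (l u : vec) (c : 'I_K) (Nrestarts Niter : nat)
          (amax bb eta eps : R) (draw : nat -> R -> vec) (xo : vec).

Let G (r : 'I_K) (x : vec) : vec := grad (F r) x.

Definition ratio (x : vec) (r : 'I_K) : R :=
  `|F r x - F c x| / normp (dualp p) (G r x - G c x).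

Definition sel (x : vec) : 'I_K := [arg min_(r < c | r != c) ratio x r]%O.

(* one inner iteration; the state is (x^{(i)}, x_out) with x_out = None
   meaning that no adversarial point was found yet (u = +oo);
   otherwise u = ||x_out - x_orig||_p. *)
Definition fab_step (st : vec * option vec) : vec * option vec :=
  let: (x, bo) := st in
  let s := sel x in
  let w := G s x - G c x in
  let b := F s x - F c x - dotv w x in
  let del := proj p l u x w b - x in
  let delo := proj p l u xo w b - xo in
  let a := Num.min (normp p del / (normp p del + normp p delo)) amax in
  let x1 := clip l u ((1 - a) *: (x + eta *: del) + a *: (xo + eta *: delo)) in
  if cls c x1 != c then
    let bo' := match bo with
               | None => Some x1
               | Some xb => if normp p (x1 - xo) < normp p (xb - xo)
                            then Some x1 else bo
               end in
    ((1 - bb) *: xo + bb *: x1, bo')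
  else (x1, bo).

Definition radius (bo : option vec) : R :=
  match bo with None => eps | Some xb => Num.min (normp p (xb - xo)) eps end.

(* restart number j; draw j r is the random point with ||draw j r - x_orig||_p = r *)
Definition fab_restart (bo : option vec) (j : nat) : option vec :=
  let x0 := if j == 1%N then xo else draw j (radius bo / 2) in
  (iter Niter fab_step (x0, bo)).2.

Definition final_search (xout : vec) : vec :=
  let s := cls c xout in
  let phi z := F s z - F c z in
  let step (ab : vec * vec) :=
    let: (a, b) := ab in
    let t := b - (phi b / (phi b + phi a)) *: (b - a) in
    if 0 < phi t then (a, t) else if phi t < 0 then (t, b) else (a, b) in
  (iter 3 step (xo, xout)).2.

Definition fab_attack : option vec :=
  omap final_search (foldl fab_restart None (iota 1 Nrestarts)).

End Alg.
End FAB.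

From Pilot Require Import Defs.
From HB Require Import structures.
From mathcomp Require Import all_boot all_order all_algebra.
From mathcomp Require Import all_classical all_reals.
From mathcomp Require Import topology normedtype derive.
Import Order.TTheory GRing.Theory Num.Theory.
Import numFieldNormedType.Exports.
Local Open Scope ring_scope.

(* FAB consults the classifier only through the differences [f_r - f_c] and
   their gradients: to compare classes, to rank the linearised decision
   boundaries by [|f_r - f_c| / ||grad f_r - grad f_c||_q], to build the
   hyperplane [pi_s], and in the sign tests and secant steps of the final
   search.  Multiplying all these differences (and hence their gradients) by
   the same [k > 0] changes none of these: orders and signs are preserved,
   the ratios and secant coefficients are homogeneous of degree 0, and
   [pi_s] is the same set of points.  Both [alpha f] and [f + beta] scale
   the differences, by [alpha] and by [1] respectively. *)

Lemma eq_arg_max_le (disp : Order.disp_t) (T : orderType disp) (I : finType)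
    (F G : I -> T) (i0 : I) :
  (forall i j, (F j <= F i)%O = (G j <= G i)%O) ->
  [arg max_(i > i0) F i]%O = [arg max_(i > i0) G i]%O.
Proof.
move=> FG; rewrite /Order.arg_max /extremum; congr odflt.
by apply: eq_pick => i /=; apply: eq_forallb => j /=; apply: FG.
Qed.

Section Homogeneity.
Context {R : realType} {d : nat}.
Implicit Types (v w x z : 'rV[R]_d) (b k : R).

Lemma normpZ p k v : 0 <= k -> normp p (k *: v) = k * normp p v.
Proof.
move=> k_ge0; case: p => /=.
- by rewrite mulr_sumr; apply: eq_bigr => i _; rewrite mxE normrM ger0_norm.
- rewrite -[k in RHS]ger0_norm // -sqrtr_sqr -sqrtrM ?sqr_ge0 //.
  by congr Num.sqrt; rewrite mulr_sumr; apply: eq_bigr => i _; rewrite mxE exprMn.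
- apply: (big_rec2 (fun a b => a = k * b)); first by rewrite mulr0.
  by move=> i a b _ ->; rewrite mxE normrM (ger0_norm k_ge0) maxr_pMr.
Qed.

Lemma dotvZl k w z : dotv (k *: w) z = k * dotv w z.
Proof. by rewrite /dotv mulr_sumr; apply: eq_bigr => i _; rewrite mxE mulrA. Qed.

Lemma onhypZ k w b : k != 0 -> onhyp (k *: w) (k * b) = onhyp w b.
Proof.
move=> k_neq0; apply: funext => z; apply: propext.
rewrite /onhyp dotvZl -mulrDr; split; last by move->; rewrite mulr0.
by move/eqP; rewrite mulf_eq0 (negPf k_neq0) => /eqP.
Qed.

Lemma projZ p l u x w b k : 0 < k -> Defs.proj p l u x (k *: w) (k * b) = Defs.proj p l u x w b.
Proof.
move=> k_gt0; rewrite /Defs.proj onhypZ ?gt_eqF //; case: ifP => // _.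
rewrite dotvZl -mulrDr sgrM gtr0_sg // mul1r.
apply/matrixP => i j; rewrite !mxE.
by rewrite mulrCA (pmulr_rgt0 _ k_gt0) (pmulr_rlt0 _ k_gt0).
Qed.

Lemma gradZ (a : R) (g : 'rV[R]_d -> R) x :
  differentiable g x -> grad (fun y => a * g y) x = a *: grad g x.
Proof.
move=> dg; apply/matrixP => i j; rewrite !mxE.
by rewrite (_ : (fun y => a * g y) = a \*: g) // deriveZ //; exact: diff_derivable.
Qed.

Lemma gradDr (b : R) (g : 'rV[R]_d -> R) x :
  differentiable g x -> grad (fun y => g y + b) x = grad g x.
Proof.
move=> dg; apply/matrixP => i j; rewrite !mxE.
rewrite (_ : (fun y => g y + b) = g + cst b) // deriveD ?derive_cst ?addr0 //.
exact: diff_derivable.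
Qed.

End Homogeneity.

Section Invariance.
Context {R : realType} {d K : nat}.
Variables (F F' : 'I_K -> 'rV[R]_d -> R) (k : R).
Hypothesis k_gt0 : 0 < k.
Hypothesis subF' : forall r q x, F' r x - F' q x = k * (F r x - F q x).
Hypothesis gradF' : forall r x, grad (F' r) x = k *: grad (F r) x.

Let k_neq0 : k != 0 := lt0r_neq0 k_gt0.

Lemma cls_invariant c x : cls F' c x = cls F c x.
Proof.
apply: eq_arg_max_le => i j.
by rewrite -subr_ge0 subF' pmulr_rge0 // subr_ge0.
Qed.

Lemma ratio_invariant p c x r : Defs.ratio F' p c x r = Defs.ratio F p c x r.
Proof.
rewrite /Defs.ratio subF' !gradF' -scalerBr normpZ ?ltW // normrM gtr0_norm //.
by rewrite invfM mulrACA divff // mul1r.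
Qed.

Lemma sel_invariant p c x : sel F' p c x = sel F p c x.
Proof. by rewrite /sel (eq_fun (ratio_invariant p c x)). Qed.

Lemma fab_step_invariant p l u c amax bb eta xo :
  fab_step F' p l u c amax bb eta xo = fab_step F p l u c amax bb eta xo.
Proof.
apply: funext => -[x bo]; rewrite /fab_step sel_invariant cls_invariant.
set s := sel F p c x.
have w_scaled : grad (F' s) x - grad (F' c) x = k *: (grad (F s) x - grad (F c) x).
  by rewrite !gradF' scalerBr.
by rewrite w_scaled subF' dotvZl -mulrBr !projZ.
Qed.

Lemma final_search_invariant c xo :
  final_search F' c xo = final_search F c xo.
Proof.
apply: funext => xout; rewrite /final_search cls_invariant.
congr (iter _ _ _).2; apply: funext => -[a b] /=.
rewrite !subF' -mulrDr invfM mulrACA divff // mul1r.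
by rewrite (pmulr_rgt0 _ k_gt0) (pmulr_rlt0 _ k_gt0).
Qed.

Lemma fab_attack_invariant p l u c Nr Ni amax bb eta eps draw xo :
  fab_attack F' p l u c Nr Ni amax bb eta eps draw xo =
  fab_attack F p l u c Nr Ni amax bb eta eps draw xo.
Proof. by rewrite /fab_attack /fab_restart fab_step_invariant final_search_invariant. Qed.

End Invariance.

Theorem proposition1 (R : realType) (d K : nat)
  (f : 'I_K -> 'rV[R]_d -> R) (p : pexp) (l u : 'rV[R]_d) (c : 'I_K)
  (Nrestarts Niter : nat) (amax bb eta eps : R)
  (draw : nat -> R -> 'rV[R]_d) (xo : 'rV[R]_d) (alpha beta : R) :
  (forall r x, differentiable (f r) x) ->
  inbox l u xo -> cls f c xo = c ->
  0 <= amax <= 1 -> 0 < bb < 1 -> 1 <= eta -> 0 < eps ->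
  (forall j r, 0 < r -> normp p (draw j r - xo) = r) ->
  0 < alpha ->
  fab_attack f p l u c Nrestarts Niter amax bb eta eps draw xo =
  fab_attack (fun r x => alpha * f r x) p l u c Nrestarts Niter amax bb eta eps draw xo
  /\
  fab_attack f p l u c Nrestarts Niter amax bb eta eps draw xo =
  fab_attack (fun r x => f r x + beta) p l u c Nrestarts Niter amax bb eta eps draw xo.
Proof.
(* Only differentiability and [alpha > 0] matter. *)
move=> f_diff _ _ _ _ _ _ _ alpha_gt0; split; symmetry.
- apply: (@fab_attack_invariant _ _ _ _ _ alpha) => // [r q x | r x].
  + by rewrite mulrBr.
  + exact: gradZ.
- apply: (@fab_attack_invariant _ _ _ _ _ 1) => // [r q x | r x].
  + by rewrite mul1r opprD addrACA subrr addr0.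
  + by rewrite scale1r gradDr.
Qed.
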